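(* Let $\psi$ be a non-negative locally finite Borel measure on $\mathbb R^d$. If every (open) half-space of $\mathbb R^d$ has infinite $\psi$-measure, then all Voronoi territories with respect to $\psi$ are bounded. In particular, if $\Psi$ is a stationary random measure on $\mathbb R^d$ which is almost surely non-zero, then almost surely all Voronoi territories with respect to $\Psi_\omega$ are bounded.
   Context: $\overline B(x,r)$ denotes the closed ball. Voronoi density with respect to $\psi$ (with $\psi(\mathbb R^d)\ge 1$): for $x\in\mathbb R^d$ let $s(x)=\sup\{s\in\mathbb R:\psi(\overline B(x,s))\le1\}$ and $v(x,\xi)=1$ if $|x-\xi|<s(x)$, $v(x,\xi)=c$ if $|x-\xi|=s(x)$, $v(x,\xi)=0$ if $|x-\xi|>s(x)$, where $c\in[0,1]$ is such that $\int v(x,\xi)\psi(d\xi)=1$, with $c=1$ if $s(x)=\infty$ or $\psi(\partial\overline B(x,s(x)))=0$. The Voronoi territory of $\xi$ with respect to $\psi$ is $\{x:v(x,\xi)>0\}$. Random setup: measurable space $(\Omega,\mathcal F)$ with a measurable flow $(\theta_s)_{s\in\mathbb R^d}$ and probability $\mathbb P$; a random measure is a measurable $\Psi:\Omega\to M$ (non-negative locally finite Borel measures), stationary if $\mathbb P$ is invariant under all $\theta_s$ and $\Psi(\theta_s\omega)(B)=\Psi(\omega)(B+s)$ for all $s,\omega,B$. *)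

From HB Require Import structures.
From mathcomp Require Import all_boot all_order all_algebra.
From mathcomp Require Import all_classical all_reals all_analysis measurable_realfun.
Set Implicit Arguments. Unset Strict Implicit. Unset Printing Implicit Defensive.
Import Order.TTheory GRing.Theory Num.Theory.
Import numFieldNormedType.Exports.
Local Open Scope classical_set_scope.
Local Open Scope ring_scope.

Definition borelRd (R : realType) (d : nat) := g_sigma_algebraType (@open 'rV[R]_d).

Section Voronoi.
Variables (R : realType) (d : nat).

Definition enorm (x : 'rV[R]_d) : R := Num.sqrt (\sum_i x ord0 i ^+ 2).

Definition cball (x : 'rV[R]_d) (r : R) : set (borelRd R d) :=
  [set y : 'rV[R]_d | enorm (x - y) <= r].
Definition oball (x : 'rV[R]_d) (r : R) : set (borelRd R d) :=
  [set y : 'rV[R]_d | enorm (x - y) < r].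
Definition sphere (x : 'rV[R]_d) (r : R) : set (borelRd R d) :=
  [set y : 'rV[R]_d | enorm (x - y) = r].

Definition dotv (u x : 'rV[R]_d) : R := \sum_i u ord0 i * x ord0 i.
Definition open_halfspace (u : 'rV[R]_d) (a : R) : set (borelRd R d) :=
  [set x : 'rV[R]_d | a < dotv u x].
Definition is_halfspace (H : set (borelRd R d)) : Prop :=
  exists (u : 'rV[R]_d) (a : R), u != 0 /\ H = open_halfspace u a.

Variable psi : {measure set (borelRd R d) -> \bar R}.

Definition locally_finite : Prop :=
  forall (x : 'rV[R]_d) (r : R), (psi (cball x r) < +oo)%E.

Definition vor_s (x : 'rV[R]_d) : \bar R :=
  ereal_sup [set r%:E | r in [set r : R | (psi (cball x r) <= 1)%E]].

(* the constant c of the definition: the unique c in [0,1] with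
   psi(open ball) + c * psi(sphere) = 1, and c = 1 if s(x) = +oo or
   psi(sphere) = 0 *)
Definition vor_c (x : 'rV[R]_d) : R :=
  match vor_s x with
  | r%:E => if psi (sphere x r) == 0%E then 1
            else fine (1%:E - psi (oball x r))%E / fine (psi (sphere x r))
  | _ => 1
  end.

Definition vor_v (x xi : 'rV[R]_d) : R :=
  if ((enorm (x - xi))%:E < vor_s x)%E then 1
  else if (enorm (x - xi))%:E == vor_s x then vor_c x
  else 0.

Definition territory (xi : 'rV[R]_d) : set 'rV[R]_d :=
  [set x | 0 < vor_v x xi].

End Voronoi.

Definition bounded_set_Rd (R : realType) (d : nat) (A : set 'rV[R]_d) : Prop :=
  exists r : R, forall x, A x -> enorm x <= r.

From HB Require Import structures.
From mathcomp Require Import all_boot all_order all_algebra.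
From mathcomp Require Import all_classical all_reals all_analysis measurable_realfun.
From mathcomp Require Import ring lra.
Set Implicit Arguments. Unset Strict Implicit. Unset Printing Implicit Defensive.
Import Order.TTheory GRing.Theory Num.Theory.
Import numFieldNormedType.Exports.
Local Open Scope classical_set_scope.
Local Open Scope ring_scope.

(* If a territory of xi were unbounded, compactness of the unit sphere would give a direction v
   and points x of the territory arbitrarily far from xi in directions arbitrarily close to v.
   The half-space {y | <v, y - xi> > 0} has infinite mass, so a bounded piece of it has mass at
   least 2; for x far enough out in a direction close enough to v, that piece lies in a closed
   ball around x of radius < |x - xi| <= s(x), which has mass at most 1.
   For a stationary random measure, Poincare recurrence of the shifts along the coordinate axes,
   applied to the countably many events "B(0, n) has mass > 1/m", shows that almost surely the
   translates of a ball of positive mass along each axis direction keep mass > 1/m infinitely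
   often. They are disjoint, and all but finitely many of them lie in any half-space whose normal
   has a nonzero coordinate of the same sign, so every half-space has infinite mass. *)

Section euclidean_geometry.
Variables (R : realType) (d : nat).
Implicit Types (x y z t u v : 'rV[R]_d).

Lemma dotv_continuous u : continuous (dotv u).
Proof.
apply: (@continuous_big _ _ _ _ _ add_continuous) => i _ y.
exact: (continuousM (@cst_continuous _ _ (u ord0 i) y) (@coord_continuous _ _ _ ord0 i y)).
Qed.

Lemma enorm_continuous : continuous (@enorm R d).
Proof.
move=> y; apply: (continuous_comp _ (@sqrt_continuous R _)); move: y.
apply: (@continuous_big _ _ _ _ _ add_continuous) => i _ z.
have ci := @coord_continuous _ _ _ ord0 i z.
by under eq_fun do rewrite expr2; exact: (continuousM ci ci).
Qed.

Lemma open_measurable_Rd (A : set 'rV[R]_d) : open A -> measurable (A : set (borelRd R d)).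
Proof. exact: sub_sigma_algebra. Qed.

Lemma closed_measurable_Rd (A : set 'rV[R]_d) : closed A -> measurable (A : set (borelRd R d)).
Proof.
move=> cA; rewrite -[A]setCK; apply: measurableC; apply: open_measurable_Rd.
exact: closed_openC.
Qed.

Lemma cball_measurable x r : measurable (cball x r).
Proof.
apply: closed_measurable_Rd.
have -> : (cball x r : set 'rV[R]_d) = (fun y => enorm (x - y)) @^-1` [set a | a <= r] by [].
apply: preimage_closed; last exact: closed_le.
move=> y _.
have cB : {for y, continuous (fun y : 'rV[R]_d => x - y)}.
  exact: (continuousB (@cst_continuous _ _ _ _) (@cvg_id _ _)).
exact: (continuous_comp cB (@enorm_continuous (x - y))).
Qed.

Lemma ball_measurable c (r : R) : measurable (ball c r : set (borelRd R d)).
Proof. by apply: open_measurable_Rd; exact: ball_open. Qed.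

Lemma open_halfspace_measurable u a : measurable (open_halfspace u a).
Proof.
apply: open_measurable_Rd; apply: (@open_comp _ _ (dotv u) [set b | a < b]).
  by move=> y _; exact: dotv_continuous.
exact: open_gt.
Qed.

Lemma coord_le_norm x (i : 'I_d) : `|x ord0 i| <= `|x|.
Proof.
rewrite [leRHS]/Num.norm /= mx_normrE.
by apply/bigmax_geP; right => /=; exists (ord0, i).
Qed.

Lemma dotv_norm_le u z : `|dotv u z| <= d%:R * `|u| * `|z|.
Proof.
apply: le_trans (ler_norm_sum _ _ _) _.
have -> : d%:R * `|u| * `|z| = \sum_(i < d) (`|u| * `|z|).
  by rewrite sumr_const card_ord -mulrA mulr_natl.
by apply: ler_sum => i _; rewrite normrM ler_pM ?coord_le_norm.
Qed.

Lemma enorm_ge0 x : 0 <= enorm x.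
Proof. exact: sqrtr_ge0. Qed.

Lemma enorm_sqr x : enorm x ^+ 2 = \sum_i x ord0 i ^+ 2.
Proof. by rewrite sqr_sqrtr // sumr_ge0 // => i _; exact: sqr_ge0. Qed.

Lemma enorm_sqr_le z : enorm z ^+ 2 <= d%:R * `|z| ^+ 2.
Proof.
have -> : d%:R * `|z| ^+ 2 = \sum_(i < d) `|z| ^+ 2.
  by rewrite sumr_const card_ord mulr_natl.
rewrite enorm_sqr; apply: ler_sum => i _; rewrite -real_normK ?num_real //.
by rewrite lerXn2r ?nnegrE // coord_le_norm.
Qed.

Lemma enorm_le_norm z : enorm z <= d%:R * `|z|.
Proof.
rewrite -(@ler_pXn2r _ 2) ?nnegrE ?enorm_ge0 ?mulr_ge0 //.
apply: le_trans (enorm_sqr_le z) _; rewrite exprMn.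
apply: ler_wpM2r; first exact: exprn_ge0.
by rewrite -natrX ler_nat; case: d => // n; rewrite expnS leq_pmulr.
Qed.

Lemma dotvBr u y z : dotv u (y - z) = dotv u y - dotv u z.
Proof. by rewrite /dotv -sumrB; apply: eq_bigr => i _; rewrite !mxE; ring. Qed.

Lemma dotvBl u v z : dotv (u - v) z = dotv u z - dotv v z.
Proof. by rewrite /dotv -sumrB; apply: eq_bigr => i _; rewrite !mxE; ring. Qed.

Lemma dotvZl (a : R) u z : dotv (a *: u) z = a * dotv u z.
Proof. by rewrite /dotv mulr_sumr; apply: eq_bigr => i _; rewrite !mxE; ring. Qed.

Lemma dotvZr (a : R) u z : dotv u (a *: z) = a * dotv u z.
Proof. by rewrite /dotv mulr_sumr; apply: eq_bigr => i _; rewrite !mxE; ring. Qed.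

Lemma dotv_delta u (i : 'I_d) : dotv u (delta_mx 0 i) = u ord0 i.
Proof.
rewrite /dotv (bigD1 i) //= mxE !eqxx mulr1 big1 ?addr0 // => j ji.
by rewrite mxE eqxx /= (negPf ji) mulr0.
Qed.

Lemma enorm_sqrB t z :
  enorm (t - z) ^+ 2 = enorm t ^+ 2 - 2 * dotv t z + enorm z ^+ 2.
Proof.
rewrite !enorm_sqr /dotv mulr_sumr -sumrB -big_split /=.
by apply: eq_bigr => i _; rewrite !mxE; ring.
Qed.

End euclidean_geometry.

Section bounded_territories.
Variables (R : realType) (d : nat).
Implicit Types (x y z t u v w : 'rV[R]_d).

Lemma territory_le_vor_s (psi : {measure set (borelRd R d) -> \bar R}) x xi :
  territory psi xi x -> ((enorm (x - xi))%:E <= vor_s psi x)%E.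
Proof.
rewrite /territory /vor_v /=.
case: ifPn => [/ltW //|_]; case: ifPn => [/eqP -> //|_].
by rewrite ltxx.
Qed.

Lemma measure_cball_le1 (psi : {measure set (borelRd R d) -> \bar R}) x r :
  (r%:E < vor_s psi x)%E -> (psi (cball x r) <= 1)%E.
Proof.
move=> /ereal_sup_gt [_ [r' /= psi_r' <-]]; rewrite lte_fin => rr'.
apply: le_trans psi_r'; apply: le_measure; rewrite ?inE; try exact: cball_measurable.
by move=> y /= /le_trans; apply; exact: ltW.
Qed.

Lemma unbounded_direction (A : set 'rV[R]_d) xi : ~ bounded_set_Rd A ->
  exists2 v, `|v| = 1 & forall L eta, 0 < eta ->
    exists x, [/\ A x, L < `|x - xi| & `|v - `|x - xi|^-1 *: (x - xi)| < eta].
Proof.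
move=> Aunb.
have far L : exists x, A x /\ L < `|x - xi|.
  apply: contrapT => /forallNP nfar; apply: Aunb.
  exists (d%:R * (L + `|xi|)) => x Ax.
  apply: (le_trans (enorm_le_norm x)); apply: ler_wpM2l => //.
  rewrite -[x in `|x|](subrK xi); apply: le_trans (ler_normD _ _) _.
  by rewrite lerD2r leNgt; apply/negP => Lx; apply: (nfar x).
pose S := [set v : 'rV[R]_d | `|v| = 1].
pose E L := [set `|x - xi|^-1 *: (x - xi) | x in [set x | A x /\ L < `|x - xi|]].
pose F := filter_from [set L : R | 0 <= L] E.
have FF : ProperFilter F.
  apply: filter_from_proper => [|L _]; last first.
    by have [x xAL] := far L; exists (`|x - xi|^-1 *: (x - xi)), x.
  apply: filter_from_filter => [|L L' L0 L'0]; first by exists 0; rewrite /= lexx.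
  exists (Num.max L L'); first by rewrite /= le_max L0.
  by move=> y [x [Ax]]; rewrite gt_max => /andP[Lx L'x] <-; split; exists x.
have FS : F S.
  exists 0; first by rewrite /= lexx.
  move=> y [x [_ x0] <-]; rewrite /S /= normrZ normfV normr_id.
  by rewrite mulVf // gt_eqF.
have cS : compact S.
  apply: bounded_closed_compact.
    exists 1; split; first exact: num_real.
    by move=> M M1 v Sv; rewrite /= Sv ltW.
  have -> : S = (fun v : 'rV[R]_d => `|v|) @^-1` [set 1] by [].
  apply: preimage_closed; last exact: closed_eq.
  by move=> y _; exact: norm_continuous.
have [v [Sv clv]] := cS F FF FS.
exists v => // L eta eta0.
have [y [[x [Ax Lx] <-] vx]] : E (Num.max 0 L) `&` ball v eta !=set0.
  by apply: clv; [exists (Num.max 0 L); rewrite /= ?le_max ?lexx | exact: nbhsx_ballx].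
exists x; split => //; first by apply: le_lt_trans Lx; rewrite le_max lexx orbT.
by move: vx; rewrite -ball_normE.
Qed.

(* [ball] is the ball of the max-norm of 'rV, whereas [cball] is Euclidean. *)
Definition trunc_halfspace u c (N : nat) : set (borelRd R d) :=
  [set y | dotv u c + N.+1%:R^-1 < dotv u y] `&` ball c N.+1%:R.

Lemma trunc_halfspace_measurable u c N : measurable (trunc_halfspace u c N).
Proof.
apply: open_measurable_Rd; apply: openI; last exact: ball_open.
apply: (@open_comp _ _ (dotv u) [set a | dotv u c + N.+1%:R^-1 < a]).
  by move=> y _; exact: dotv_continuous.
exact: open_gt.
Qed.

Lemma trunc_halfspace_homo u c :
  {homo trunc_halfspace u c : n m / (n <= m)%N >-> (n <= m)%O}.
Proof.
move=> n m nm; rewrite subsetEset => y [/= uy cy]; split => /=.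
  by apply: le_lt_trans uy; rewrite lerD2l lef_pV2 ?posrE ?ltr0Sn // ler_nat.
by apply: le_ball cy; rewrite ler_nat.
Qed.

Lemma bigcup_trunc_halfspace u c :
  \bigcup_N trunc_halfspace u c N = open_halfspace u (dotv u c).
Proof.
apply/seteqP; split => [y [N _ [/= uy _]]|y /= uy].
  by apply: lt_trans uy; rewrite ltrDl invr_gt0 ltr0Sn.
have gap_gt0 : 0 < dotv u y - dotv u c by rewrite subr_gt0.
exists (Num.truncn ((dotv u y - dotv u c)^-1 + `|c - y|)) => //; split => /=.
  rewrite -ltrBrDl -[X in _ < X]invrK ltf_pV2 ?posrE ?invr_gt0 ?ltr0Sn //.
  by apply: le_lt_trans (truncnS_gt _); rewrite lerDl.
rewrite -ball_normE /=.
by apply: le_lt_trans (truncnS_gt _); rewrite lerDr invr_ge0 ltW.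
Qed.

Lemma trunc_halfspace_measure_ge (psi : {measure set (borelRd R d) -> \bar R}) u c M :
  psi (open_halfspace u (dotv u c)) = +oo%E ->
  exists N, (M%:E <= psi (trunc_halfspace u c N))%E.
Proof.
move=> psiH; have mT := trunc_halfspace_measurable u c.
have : (psi \o trunc_halfspace u c) N @[N --> \oo] --> +oo%E.
  rewrite -psiH -bigcup_trunc_halfspace.
  apply: nondecreasing_cvg_mu (@trunc_halfspace_homo u c) => //.
  exact: bigcup_measurable.
by move=> /cvgeyPge/(_ M) [N _ /(_ N (leqnn N))]; exists N.
Qed.

Lemma trunc_halfspace_dotv_ge N u w c l y :
  `|u - w| < (2 * (d%:R + 1) * N.+1%:R ^+ 2)^-1 ->
  N.+1%:R * (d%:R * N.+1%:R ^+ 2 + 1) <= l ->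
  trunc_halfspace u c N y -> enorm (y - c) ^+ 2 + 1 <= 2 * dotv (l *: w) (y - c).
Proof.
(* With n = N + 1: the bound on |u - w| gives <w, y - c> >= 1/(2n), and then the bound on l
   gives l <w, y - c> >= (d n^2 + 1)/2 >= (enorm (y - c)^2 + 1)/2. *)
set n : R := N.+1%:R; set eta := (2 * _ * _)^-1 => uw nl [/= uy cy].
set z := y - c.
have n_gt0 : 0 < n by rewrite ltr0Sn.
have uz : n^-1 < dotv u z by rewrite dotvBr ltrBrDl.
have z_lt : `|z| < n by move: cy; rewrite -ball_normE /= distrC.
have dn_eta : d%:R * eta * n <= (2 * n)^-1.
  have -> : d%:R * eta * n = (d%:R / (d%:R + 1)) * (2 * n)^-1.
    by rewrite /eta /n; field; rewrite [1 + _]addrC !natr1 !pnatr_eq0.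
  apply: ler_piMl; first by rewrite invr_ge0 mulr_ge0 // ltW.
  by rewrite ler_pdivrMr ?ltr_wpDl // mul1r lerDl.
have wz : (2 * n)^-1 <= dotv w z.
  have : `|dotv (w - u) z| <= d%:R * eta * n.
    apply: le_trans (dotv_norm_le _ _) _; rewrite -!mulrA ler_wpM2l //.
    by rewrite distrC ler_pM // ltW.
  rewrite dotvBl ler_norml => /andP[wuz _].
  have : n^-1 = (2 * n)^-1 + (2 * n)^-1.
    by rewrite /n; field; rewrite [1 + _]addrC natr1 pnatr_eq0.
  move: uz dn_eta wuz; set a := n^-1; set b := (2 * n)^-1; set e := d%:R * eta * n; lra.
have ez : enorm z ^+ 2 <= d%:R * n ^+ 2.
  apply: le_trans (enorm_sqr_le z) _; rewrite ler_wpM2l // lerXn2r ?nnegrE //.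
  exact: ltW.
have : n * (d%:R * n ^+ 2 + 1) * (2 * n)^-1 <= l * dotv w z.
  by apply: ler_pM; rewrite ?invr_ge0 ?mulr_ge0 ?addr_ge0 ?mulr_ge0 ?exprn_ge0 // ltW.
have -> : n * (d%:R * n ^+ 2 + 1) * (2 * n)^-1 = (d%:R * n ^+ 2 + 1) / 2.
  by rewrite /n; field; rewrite [1 + _]addrC natr1 pnatr_eq0.
rewrite dotvZl; lra.
Qed.

Lemma sub_cball_of_dotv_ge (S : set 'rV[R]_d) c t :
  (forall y, S y -> enorm (y - c) ^+ 2 + 1 <= 2 * dotv t (y - c)) ->
  exists2 r, r < enorm t & S `<=` cball (c + t) r.
Proof.
(* enorm (c + t - y)^2 = enorm t^2 - 2 <t, y - c> + enorm (y - c)^2 <= enorm t^2 - 1 on S. *)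
move=> St; have [S0|/set0P[y0 Sy0]] := eqVneq S set0.
  by exists (enorm t - 1); [rewrite ltrBlDr ltrDl | rewrite S0].
have t_ge1 : 1 <= enorm t ^+ 2.
  have := St y0 Sy0; have := enorm_sqrB t (y0 - c).
  have := sqr_ge0 (enorm (t - (y0 - c))); lra.
exists (Num.sqrt (enorm t ^+ 2 - 1)).
  by rewrite -[X in _ < X]ger0_norm ?enorm_ge0 // -sqrtr_sqr ltr_sqrt; lra.
move=> y Sy; rewrite /cball /=.
have -> : c + t - y = t - (y - c) by rewrite opprB addrA (addrC t c).
rewrite -[leLHS]ger0_norm ?enorm_ge0 // -sqrtr_sqr.
by apply: ler_wsqrtr; rewrite enorm_sqrB; have := St y Sy; lra.
Qed.

Lemma territory_bounded (psi : {measure set (borelRd R d) -> \bar R}) xi :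
  (forall H, is_halfspace H -> psi H = +oo%E) -> bounded_set_Rd (territory psi xi).
Proof.
move=> psi_half; apply: contrapT => /(unbounded_direction xi) [v v1 near_v].
have v0 : v != 0 by rewrite -normr_gt0 v1.
have psiH : psi (open_halfspace v (dotv v xi)) = +oo%E.
  by apply: psi_half; exists v, (dotv v xi).
have [N psiN] := trunc_halfspace_measure_ge 2 psiH.
pose eta : R := (2 * (d%:R + 1) * N.+1%:R ^+ 2)^-1.
have eta_gt0 : 0 < eta by rewrite invr_gt0 !mulr_gt0 ?exprn_gt0 ?ltr_wpDl.
have [x [Tx xfar vx]] := near_v (N.+1%:R * (d%:R * N.+1%:R ^+ 2 + 1)) eta eta_gt0.
set l := `|x - xi| in xfar vx; set w := l^-1 *: (x - xi) in vx.
have l_gt0 : 0 < l by apply: le_lt_trans xfar; rewrite mulr_ge0 ?addr_ge0 ?mulr_ge0 ?exprn_ge0.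
have xw : x - xi = l *: w by rewrite /w scalerA mulfV ?gt_eqF // scale1r.
have [r r_lt sub] := sub_cball_of_dotv_ge
  (fun y => @trunc_halfspace_dotv_ge N v w xi l y vx (ltW xfar)).
rewrite -xw addrC subrK in sub.
have psi_cball : (psi (cball x r) <= 1)%E.
  apply: measure_cball_le1; apply: lt_le_trans (territory_le_vor_s Tx).
  by rewrite lte_fin xw.
have psi_sub : (psi (trunc_halfspace v xi N) <= psi (cball x r))%E.
  apply: le_measure => //; rewrite inE; first exact: trunc_halfspace_measurable.
  exact: cball_measurable.
by have := le_trans psiN (le_trans psi_sub psi_cball); rewrite lee_fin; lra.
Qed.

End bounded_territories.

Lemma ae_forall_countable d (T : measurableType d) (R : realType)
    (mu : {measure set T -> \bar R}) (I : countType) (P : I -> T -> Prop) :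
  (forall i, {ae mu, forall x, P i x}) -> {ae mu, forall x, forall i, P i x}.
Proof.
move=> aeP.
have : {ae mu, forall x, forall n, if unpickle n is Some i then P i x else True}.
  by apply: ae_foralln => n; case: (unpickle n) => [i|]; [exact: aeP | exact: aeW].
by apply: filterS => x Px i; have := Px (pickle i); rewrite pickleK.
Qed.

Lemma measure_bigcup_recurrent d (T : measurableType d) (R : realType)
    (mu : {measure set T -> \bar R}) (F : nat -> set T) (eps : R) :
  (forall k, measurable (F k)) -> trivIset setT F -> 0 < eps ->
  (forall K, exists2 k, (K <= k)%N & (eps%:E < mu (F k))%E) ->
  mu (\bigcup_k F k) = +oo%E.
Proof.
move=> mF tF eps_gt0 recF.
have partial N : exists K, ((N%:R * eps)%:E <= \sum_(0 <= k < K) mu (F k))%E.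
  elim: N => [|N [K IH]]; first by exists 0%N; rewrite mul0r big_geq.
  have [k Kk epsk] := recF K; exists k.+1.
  rewrite big_nat_recr //= -natr1 mulrDl mul1r EFinD; apply: leeD (ltW epsk).
  by apply: le_trans IH _; exact: lee_sum_nneg_natr.
rewrite measure_semi_bigcup //; last exact: bigcup_measurable.
apply: eq_infty => r; have [K rK] := partial (Num.truncn (r / eps)).+1.
apply: le_trans (le_trans rK (nneseries_lim_ge _ _)) => //.
by rewrite lee_fin -ler_pdivrMr // ltW // truncnS_gt.
Qed.

Definition no_return (T : Type) (f : T -> T) (A : set T) : set T :=
  [set x | A x /\ forall k, ~ A (iter k.+1 f x)].

Lemma iter_no_return (T : Type) (f : T -> T) (A : set T) x K :
  A x -> (forall k, (K <= k)%N -> ~ A (iter k f x)) ->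
  exists j, no_return f A (iter j f x).
Proof.
elim: K => [Ax /(_ 0%N isT)//|K IH Ax never].
have [AK|nAK] := pselect (A (iter K f x)).
  by exists K; split => // k; rewrite -iterD; apply: never; rewrite addSn ltnS leq_addl.
by apply: IH => // k; rewrite leq_eqVlt => /orP[/eqP <- //|]; exact: never.
Qed.

Lemma trivIset_preimage_iter_no_return (T : Type) (f : T -> T) (A : set T) :
  trivIset setT (fun j => iter j f @^-1` no_return f A).
Proof.
apply: ltn_trivIset => l j jl; apply/seteqP; split => // x [[_ never] [Al _]].
by apply: (never (l - j.+1)%N); rewrite -iterD addSnnS subnK.
Qed.

Section poincare_recurrence.
Context d (T : measurableType d) (R : realType) (P : probability T R).
Variable f : T -> T.
Hypothesis mf : measurable_fun setT f.
Hypothesis P_f : forall A, measurable A -> P (f @^-1` A) = P A.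

Lemma measurable_preimage_iter k A : measurable A -> measurable (iter k f @^-1` A).
Proof.
elim: k A => [//|k IH] A mA.
have -> : iter k.+1 f @^-1` A = iter k f @^-1` (f @^-1` A) by [].
by apply: IH; rewrite -[X in measurable X]setTI; exact: mf.
Qed.

Lemma probability_preimage_iter k A : measurable A -> P (iter k f @^-1` A) = P A.
Proof.
elim: k A => [//|k IH] A mA.
have -> : iter k.+1 f @^-1` A = iter k f @^-1` (f @^-1` A) by [].
by rewrite IH ?P_f //; rewrite -[X in measurable X]setTI; exact: mf.
Qed.

Lemma no_return_measurable A : measurable A -> measurable (no_return f A).
Proof.
move=> mA; have -> : no_return f A = A `&` \bigcap_k (iter k.+1 f @^-1` (~` A)).
  by apply/seteqP; split => x [Ax never]; split => // k; [move=> _|]; exact: never.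
apply: measurableI => //; apply: bigcapT_measurable => k.
exact/measurable_preimage_iter/measurableC.
Qed.

Lemma no_return_probability0 A : measurable A -> P (no_return f A) = 0%E.
Proof.
move=> mA; have mB := no_return_measurable mA; set B := no_return f A in mB *.
have PB_fin : P B = (fine (P B))%:E.
  by rewrite fineK // ge0_fin_numE // (le_lt_trans (probability_le1 P mB)) ?ltey.
set p := fine (P B) in PB_fin.
apply/eqP; rewrite eq_le measure_ge0 andbT PB_fin lee_fin leNgt; apply/negP => p_gt0.
have mC j : measurable (iter j f @^-1` B) := measurable_preimage_iter j mB.
have PC : P (\bigcup_j iter j f @^-1` B) = +oo%E.
  apply: (@measure_bigcup_recurrent _ _ _ P _ (p / 2)) => //.
  - exact: trivIset_preimage_iter_no_return.
  - by rewrite divr_gt0.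
  - by move=> K; exists K => //; rewrite /= probability_preimage_iter // PB_fin lte_fin; lra.
by have := probability_le1 P (bigcup_measurable (P := setT) (fun j _ => mC j)); rewrite PC.
Qed.

Theorem poincare_recurrence A : measurable A ->
  {ae P, forall x, A x -> forall K, exists2 k, (K <= k)%N & A (iter k f x)}.
Proof.
move=> mA; have mB := no_return_measurable mA.
have : P.-negligible (\bigcup_j iter j f @^-1` no_return f A).
  apply: negligible_bigcup => j; exists (iter j f @^-1` no_return f A).
  split; [exact: measurable_preimage_iter | | by []].
  exact: etrans (probability_preimage_iter j mB) (no_return_probability0 mA).
apply: negligibleS => x /= /not_implyP [Ax] /existsNP [K never].
have [j Bj] : exists j, no_return f A (iter j f x).
  by apply: (@iter_no_return _ _ _ _ K Ax) => k Kk Ak; apply: never; exists k.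
by exists j.
Qed.

End poincare_recurrence.

Section stationary_halfspaces.
Variables (R : realType) (d : nat).
Implicit Types (x y z u : 'rV[R]_d).

Lemma ball_translate c (r : R) s :
  [set b + s | b in (ball c r : set 'rV[R]_d)] = ball (c + s) r.
Proof.
apply/seteqP; split => [_ [b cb <-]|y cy].
  by move: cb; rewrite -!ball_normE /= opprD addrACA subrr addr0.
exists (y - s); last by rewrite subrK.
by move: cy; rewrite -!ball_normE /= opprB addrA addrAC.
Qed.

Lemma trivIset_ball_axis (i : 'I_d) (c rho : R) : `|c| = 2 * rho ->
  trivIset setT (fun k : nat => ball (k%:R *: (c *: delta_mx ord0 i)) rho : set 'rV[R]_d).
Proof.
set s : 'rV[R]_d := c *: delta_mx ord0 i => normc.
have near_coord k y : ball (k%:R *: s) rho y -> `|y ord0 i - k%:R * c| < rho.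
  have s_i : (k%:R *: s) ord0 i = k%:R * c by rewrite !mxE !eqxx mulr1.
  rewrite -ball_normE /= distrC -s_i => ky; apply: le_lt_trans ky.
  by have := coord_le_norm (y - k%:R *: s) i; rewrite !mxE.
apply: ltn_trivIset => l k kl; apply/seteqP; split => // y [ky ly]; exfalso.
have rho_gt0 : 0 < rho by move: (near_coord k y ky); apply: le_lt_trans.
have := ler_distD (y ord0 i) (l%:R * c) (k%:R * c).
rewrite -mulrBl normrM normc -natrB; last exact: ltnW.
rewrite normr_nat (distrC (l%:R * c)).
have : 2 * rho <= (l - k)%:R * (2 * rho).
  by apply: ler_peMl; [rewrite mulr_ge0 // ltW | rewrite ler1n subn_gt0].
move: (near_coord k y ky) (near_coord l y ly); set n : R := (l - k)%:R; lra.
Qed.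

Lemma ball_axis_sub_halfspace u a (i : 'I_d) (c rho : R) : 0 < c * u ord0 i ->
  exists K0, forall k, (K0 <= k)%N ->
    ball (k%:R *: (c *: delta_mx ord0 i)) rho `<=` open_halfspace u a.
Proof.
set s : 'rV[R]_d := c *: delta_mx ord0 i => cu_gt0.
exists (Num.truncn ((a + d%:R * `|u| * rho) / (c * u ord0 i))).+1 => k K0k y ky.
have : (a + d%:R * `|u| * rho) / (c * u ord0 i) < k%:R.
  by apply: lt_le_trans (truncnS_gt _) _; rewrite ler_nat.
rewrite ltr_pdivrMr // => ak.
have : `|dotv u (y - k%:R *: s)| <= d%:R * `|u| * rho.
  apply: le_trans (dotv_norm_le _ _) _; rewrite ler_wpM2l ?mulr_ge0 //.
  by move: ky; rewrite -ball_normE /= distrC => /ltW.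
rewrite ler_norml dotvBr dotvZr dotvZr dotv_delta /open_halfspace /= => /andP[+ _].
move: ak; set D := d%:R * `|u| * rho; set K := k%:R * (c * u ord0 i); lra.
Qed.

Lemma halfspace_measure_infinite (mu : {measure set (borelRd R d) -> \bar R})
    u a (i : 'I_d) (c rho eps : R) :
  0 < eps -> `|c| = 2 * rho -> 0 < c * u ord0 i ->
  (forall K, exists2 k, (K <= k)%N &
     (eps%:E < mu (ball (k%:R *: (c *: delta_mx ord0 i)) rho))%E) ->
  mu (open_halfspace u a) = +oo%E.
Proof.
move=> eps_gt0 normc cu_gt0 rec; have [K0 inH] := ball_axis_sub_halfspace a rho cu_gt0.
pose F k := open_halfspace u a `&` ball (k%:R *: (c *: delta_mx ord0 i)) rho.
have mF k : measurable (F k).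
  exact: measurableI (open_halfspace_measurable u a) (ball_measurable _ _).
have recF K : exists2 k, (K <= k)%N & (eps%:E < mu (F k))%E.
  have [k Kk epsk] := rec (maxn K K0); exists k; first exact: leq_trans (leq_maxl _ _) Kk.
  by rewrite /F setIidr //; apply: inH; exact: leq_trans (leq_maxr _ _) Kk.
have tF : trivIset setT F by apply: trivIset_setIl; exact: trivIset_ball_axis.
apply/eqP; rewrite eq_le leey /= -(measure_bigcup_recurrent mF tF eps_gt0 recF).
apply: le_measure; rewrite ?inE; last by move=> y [k _ []].
  exact: bigcup_measurable.
exact: open_halfspace_measurable.
Qed.

Lemma ball0_measure_gt (mu : {measure set (borelRd R d) -> \bar R}) :
  (exists B, measurable B /\ mu B <> 0%E) ->
  exists n m : nat, (m.+1%:R^-1%:E < mu (ball (0%R : 'rV[R]_d) n.+1%:R))%E.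
Proof.
case=> B [mB muB].
have [n ball_gt0] : exists n, (0 < mu (ball (0%R : 'rV[R]_d) n.+1%:R))%E.
  apply: contrapT => /forallNP ball0; apply: muB; apply/eqP.
  rewrite eq_le measure_ge0 andbT.
  have := measure_sigma_subadditive mu (fun n => ball_measurable 0 n.+1%:R) mB.
  rewrite /subset_sigma_subadditive eseries0; last first.
    by move=> k _ _; apply/eqP; rewrite eq_le measure_ge0 andbT leNgt; exact/negP/ball0.
  apply => y _; exists (Num.truncn `|y|) => //=.
  by rewrite -ball_normE /= sub0r normrN truncnS_gt.
exists n; move: ball_gt0; case: (mu _) => [r| |] // r_gt0; last by exists 0%N; exact: ltey.
exists (Num.truncn r^-1); rewrite lte_fin -[ltRHS]invrK ltf_pV2 ?posrE ?invr_gt0 //.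
exact: truncnS_gt.
Qed.

Lemma iter_flow_ball (dO : measure_display) (Omega : measurableType dO)
    (theta : 'rV[R]_d -> Omega -> Omega)
    (Psi : Omega -> {measure set (borelRd R d) -> \bar R}) :
  (forall s w (B : set (borelRd R d)), measurable B ->
     Psi (theta s w) B = Psi w [set b + s | b in B]) ->
  forall s k w c r, Psi (iter k (theta s) w) (ball c r) = Psi w (ball (c + k%:R *: s) r).
Proof.
move=> stat s; elim=> [|k IH] w c r; first by rewrite scale0r addr0.
rewrite /= stat ?ball_translate ?IH; last exact: ball_measurable.
by rewrite -addrA -natr1 scalerDl scale1r (addrC s).
Qed.

Theorem stationary_halfspace_infinite (dO : measure_display) (Omega : measurableType dO)
    (P : probability Omega R) (theta : 'rV[R]_d -> Omega -> Omega)
    (Psi : Omega -> {measure set (borelRd R d) -> \bar R}) :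
  measurable_fun setT (fun p : (borelRd R d * Omega)%type => theta p.1 p.2) ->
  (forall s (A : set Omega), measurable A -> P (theta s @^-1` A) = P A) ->
  (forall B : set (borelRd R d), measurable B ->
     measurable_fun [set: Omega] ((fun w => Psi w B) : Omega -> \bar R)) ->
  (forall s w (B : set (borelRd R d)), measurable B ->
     Psi (theta s w) B = Psi w [set b + s | b in B]) ->
  {ae P, forall w, exists B : set (borelRd R d), measurable B /\ Psi w B <> 0%E} ->
  {ae P, forall w H, is_halfspace H -> Psi w H = +oo%E}.
Proof.
move=> mflow P_theta mPsi stat nz0.
(* shifts of length 2(n + 1) keep the translates of B(0, n + 1) along an axis disjoint *)
pose c (n : nat) (b : bool) : R := (if b then 1 else -1) * (2 * n.+1%:R).
have recurrent : {ae P, forall w (p : nat * nat * 'I_d * bool),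
    let: (n, m, i, b) := p in
    (m.+1%:R^-1%:E < Psi w (ball (0%R : 'rV[R]_d) n.+1%:R))%E ->
    forall K, exists2 k, (K <= k)%N &
      (m.+1%:R^-1%:E < Psi w (ball (k%:R *: (c n b *: delta_mx ord0 i)) n.+1%:R))%E}.
  apply: ae_forall_countable => -[[[n m] i] b].
  set s : 'rV[R]_d := c n b *: delta_mx ord0 i.
  have mtheta : measurable_fun setT (theta s) := measurable_fun_pair2 (s : borelRd R d) mflow.
  have mA : measurable [set w | (m.+1%:R^-1%:E < Psi w (ball (0%R : 'rV[R]_d) n.+1%:R))%E].
    rewrite -[X in measurable X]setTI.
    exact: (emeasurable_fun_o_infty measurableT (mPsi _ (ball_measurable _ _))).
  have := poincare_recurrence mtheta (P_theta s) mA.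
  apply: filterS => w rec_w A0w K; have [k Kk Ak] := rec_w A0w K.
  exists k; first exact: Kk.
  by move: Ak; rewrite /= (iter_flow_ball stat) add0r.
move: nz0 recurrent; apply: filterS2 => w nz0w rec_w _ [u [a [u0 ->]]].
have [n [m ball_gt]] := ball0_measure_gt nz0w.
have [i ui] : exists i, u ord0 i != 0.
  apply: contrapT => /forallNP ui0; move/eqP: u0; apply; apply/rowP => j.
  by rewrite mxE; apply/eqP/negPn/negP/ui0.
pose b := 0 < u ord0 i.
have /= rec_nmib := rec_w (n, m, i, b) ball_gt.
apply: (halfspace_measure_infinite a _ _ _ rec_nmib).
- by rewrite invr_gt0 ltr0Sn.
- by rewrite /c; case: ifP => _; rewrite ?mulN1r ?normrN ?mul1r ger0_norm.
- rewrite /c /b; case: ifPn => [ui_gt0|ui_le0]; first by rewrite mul1r !mulr_gt0 ?ltr0Sn.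
  rewrite mulN1r mulNr -mulrN mulr_gt0 ?mulr_gt0 ?ltr0Sn // oppr_gt0.
  by rewrite lt_neqAle ui /= leNgt.
Qed.

End stationary_halfspaces.

Theorem mainTheorem16 (R : realType) (d : nat) :
  (forall psi : {measure set (borelRd R d) -> \bar R},
      locally_finite psi ->
      (1 <= psi setT)%E ->
      (forall H, is_halfspace H -> psi H = +oo%E) ->
      forall xi : 'rV[R]_d, bounded_set_Rd (territory psi xi))
  /\
  (forall (dO : measure_display) (Omega : measurableType dO)
          (P : probability Omega R)
          (theta : 'rV[R]_d -> Omega -> Omega)
          (Psi : Omega -> {measure set (borelRd R d) -> \bar R}),
      theta 0 = id ->
      (forall s t : 'rV[R]_d, theta (s + t) = theta s \o theta t) ->
      measurable_fun setT (fun p : (borelRd R d * Omega)%type => theta p.1 p.2) ->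
      (forall (s : 'rV[R]_d) (A : set Omega), measurable A ->
         P (theta s @^-1` A) = P A) ->
      (forall w, locally_finite (Psi w)) ->
      (forall B : set (borelRd R d), measurable B ->
         measurable_fun [set: Omega] ((fun w => Psi w B) : Omega -> \bar R)) ->
      (forall (s : 'rV[R]_d) (w : Omega) (B : set (borelRd R d)), measurable B ->
         Psi (theta s w) B = Psi w [set (b : 'rV[R]_d) + s | b in B]) ->
      {ae P, forall w, exists B : set (borelRd R d), measurable B /\ Psi w B <> 0%E} ->
      {ae P, forall w, forall xi : 'rV[R]_d, bounded_set_Rd (territory (Psi w) xi)}).
Proof.
split=> [psi _ _ psi_half xi|dO Omega P theta Psi _ _ mflow P_theta _ mPsi stat nz0].
  exact: territory_bounded.
have := stationary_halfspace_infinite mflow P_theta mPsi stat nz0.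
by apply: filterS => w psi_half xi; exact: territory_bounded.
Qed.
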